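(* For every $l\in\mathbb N$, the closure of the complex curve $\Gamma_l=\{P_l(\lambda,\mu^2)=0\}$ in $\mathbb{CP}^2\supset\mathbb C^2_{(\lambda,\mu)}$ intersects the line at infinity exactly at the points $(\lambda:\mu:0)$ with $\lambda/\mu\in\{l-1,l-3,\dots,-(l-1)\}$; that is, the asymptotic directions of the branches of $\Gamma_l$ at infinity correspond to the ratios $\lambda/\mu=l-1,l-3,\dots,-(l-1)$. In particular, the closure of $\Gamma_l$ does not contain the point of intersection of the $\lambda$-axis with the line at infinity.
   Context: For $l\in\mathbb N$ and $\mu\in\mathbb C$, $H_l$ is the tridiagonal $l\times l$ matrix with entries $H_{l;jj}=(1-j)(l-j+1)$, $H_{l;j,j+1}=\mu j$, $H_{l;j,j-1}=\mu(l-j+1)$, and $H_{l;ij}=0$ if $|i-j|\geq 2$; $\det(H_l+\lambda\,\mathrm{Id})$ is a polynomial of degree $l$ in $(\lambda,\mu^2)$, written $P_l(\lambda,\mu^2)$. *)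

From HB Require Import structures.
From mathcomp Require Import all_boot all_order all_algebra.
From mathcomp Require Import reals.
From mathcomp Require Import complex.
Set Implicit Arguments. Unset Strict Implicit. Unset Printing Implicit Defensive.
Import Order.TTheory GRing.Theory Num.Theory.
Local Open Scope ring_scope.

Section Defs.
Variable R : realType.
Local Notation C := (complex R).

(* The l x l tridiagonal matrix H_l (0-based indices: row i = paper's j-1):
   H_{jj} = (1-j)(l-j+1) = -(i (l-i)),
   H_{j,j+1} = mu j = mu (i+1),
   H_{j,j-1} = mu (l-j+1) = mu (l-i),  0 otherwise. *)
Definition Hmx (l : nat) (mu : C) : 'M[C]_l :=
  \matrix_(i < l, j < l)
    if j == i then - ((i * (l - i))%N)%:R
    else if (j : nat) == i.+1 then mu * (i.+1)%:R
    else if (i : nat) == j.+1 then mu * (l - i)%:R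
    else 0.

(* det(H_l + lambda Id), i.e. P_l(lambda, mu^2), as a function of (lambda, mu) *)
Definition Pl (l : nat) (lam mu : C) : C := \det (Hmx l mu + lam%:M).

Definition cabs (z : C) : R := Normc.normc z.
Definition cvgC (u : nat -> C) (a : C) : Prop :=
  forall eps : R, 0 < eps -> exists N : nat, forall n, (N <= n)%N -> cabs (u n - a) < eps.

(* The point (a : b : 0) of the line at infinity of CP^2 (with C^2 embedded as
   (lam, mu) |-> (lam : mu : 1)) lies in the (Euclidean) closure of
   Gamma_l = {P_l = 0}: it is the limit in CP^2 of points (lam_n : mu_n : 1)
   of Gamma_l, i.e. some homogeneous representatives (t_n lam_n : t_n mu_n : t_n)
   converge to (a, b, 0). Meaningful for (a, b) <> (0, 0). *)
Definition closure_at_infinity (l : nat) (a b : C) : Prop :=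
  exists (lam mu t : nat -> C),
    (forall n, Pl l (lam n) (mu n) = 0) /\
    (forall n, t n != 0) /\
    cvgC t 0 /\
    cvgC (fun n => t n * lam n) a /\
    cvgC (fun n => t n * mu n) b.

End Defs.

(* Split H_l(mu) = D + mu J, with D diagonal and J the Sylvester-Kac matrix
   (zero diagonal, super-diagonal 1, ..., l-1, sub-diagonal l-1, ..., 1).
   Rescaling a sequence of points of Gamma_l by t -> 0 turns P_l = 0 into
   det(t D + x I + y J) = 0 with (x, y) -> (a, b), so the limit point (a : b : 0)
   satisfies det(a I + b J) = 0.  Conversely, if det(a I + b J) = 0, the monic
   polynomials z |-> det(z I + D/k + b J) are small at a, hence have roots z_k
   tending to a, and (k z_k, k b) lies on Gamma_l.
   On coefficient vectors of polynomials of degree < l, J acts as the operator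
   (1 - x^2) d/dx + (l-1) x, whose eigenfunctions (x+1)^(l-1-k) (x-1)^k have the
   l distinct eigenvalues l-1-2k.  This is the whole spectrum of J, and it is
   symmetric, so det(a I + b J) = 0 means b <> 0 and a/b = l-1-2k for some k < l. *)

From HB Require Import structures.
From mathcomp Require Import all_boot all_order all_algebra.
From mathcomp Require Import reals complex.
From mathcomp Require Import ring lra zify.
From Stdlib Require Import IndefiniteDescription.
Set Implicit Arguments. Unset Strict Implicit. Unset Printing Implicit Defensive.
Import Order.TTheory GRing.Theory Num.Theory.
Local Open Scope ring_scope.

Lemma horner_char_poly (R : comNzRingType) n (A : 'M[R]_n) x :
  (char_poly A).[x] = \det (x%:M - A).
Proof.
rewrite /char_poly -horner_evalE -det_map_mx; congr (\det _).
by apply/matrixP => i j; rewrite !mxE rmorphB rmorphMn /= !horner_evalE hornerX hornerC.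
Qed.

Section KacMatrix.
Variable F : numFieldType.

Lemma mul_deriv_exp (p : {poly F}) n : p * (p ^+ n)^`() = p^`() * p ^+ n *+ n.
Proof. by case: n => [|n]; rewrite deriv_exp ?exprS /=; ring. Qed.

Lemma sylvester_ode a b :
  let h := ('X + 1) ^+ a * ('X - 1) ^+ b : {poly F} in
  (1 - 'X ^+ 2) * h^`() + 'X * h *+ (a + b) = h *+ a - h *+ b.
Proof.
move=> h; set u : {poly F} := 'X + 1; set w : {poly F} := 'X - 1.
have du : u^`() = 1 by rewrite derivD derivX -polyC1 derivC addr0.
have dw : w^`() = 1 by rewrite -polyC1 derivXsubC.
have -> : 1 - 'X ^+ 2 = - (u * w) by rewrite /u /w; ring.
rewrite derivM.
have -> : - (u * w) * ((u ^+ a)^`() * w ^+ b + u ^+ a * (w ^+ b)^`())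
  = - (w * w ^+ b * (u * (u ^+ a)^`()) + u * u ^+ a * (w * (w ^+ b)^`())).
  by ring.
rewrite !mul_deriv_exp du dw /h -/u -/w.
move: (u ^+ a) (w ^+ b) => U W; rewrite /u /w; ring.
Qed.

Variable l : nat.

Definition kac_mx : 'M[F]_l := \matrix_(i < l, j < l)
  if (j : nat) == i.+1 then (i.+1)%:R
  else if (i : nat) == j.+1 then (l - i)%:R
  else 0.

Lemma coef_kac_op (h : {poly F}) j : (j < l)%N ->
  ((1 - 'X ^+ 2) * h^`() + 'X * h *+ l.-1)`_j =
  h`_j.+1 *+ j.+1 + (if j is j'.+1 then h`_j' *+ (l - j) else 0).
Proof.
move=> jl; rewrite mulrBl mul1r coefD coefB coefMn coefXnM coefXM !coef_deriv.
case: j jl => [|[|j]] jl /=; rewrite ?subr0 ?mul0rn ?addr0 ?subn1 //.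
have -> : (j.+2 - 2 = j)%N by lia.
have -> : l.-1 = (j.+1 + (l - j.+2))%N by lia.
by rewrite mulrnDr addrA subrK.
Qed.

Lemma kac_mx_poly (h : {poly F}) : (size h <= l)%N ->
  kac_mx *m \col_(i < l) h`_i =
  \col_(i < l) ((1 - 'X ^+ 2) * h^`() + 'X * h *+ l.-1)`_i.
Proof.
move=> shl; apply/matrixP => j k; rewrite !mxE coef_kac_op //.
have term i : kac_mx j i * (\col_(i0 < l) h`_i0) i k =
    (if (i : nat) == j.+1 then h`_j.+1 *+ j.+1 else 0) +
    (if (j : nat) == i.+1 then h`_i *+ (l - j) else 0).
  rewrite !mxE; case: eqP => [->|_]; case: eqP => [E|_];
    rewrite ?mul0r ?addr0 ?add0r ?mulr_natl //; lia.
under eq_bigr do rewrite term.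
rewrite big_split /= -!big_mkcond /= (big_ord1_eq _ (fun=> h`_j.+1 *+ j.+1)).
congr (_ + _).
  by case: ltnP => // lj; rewrite nth_default ?mul0rn // (leq_trans shl).
case: j {term} => [[|j] jl] /=; first by rewrite big_pred0.
under eq_bigl do rewrite eqSS eq_sym.
by rewrite (big_ord1_eq _ (fun i => h`_i *+ (l - j.+1))) ltnW.
Qed.

Definition kac_eigen k : F := (l.-1)%:R - (2 * k)%:R.

Definition kac_eigenpoly k : {poly F} := ('X + 1) ^+ (l.-1 - k) * ('X - 1) ^+ k.

Lemma kac_eigenpoly_monic k : kac_eigenpoly k \is monic.
Proof. by rewrite monicMl ?monic_exp // -polyC1 ?monicXaddC ?monicXsubC. Qed.

Lemma size_kac_eigenpoly k : (k < l)%N -> size (kac_eigenpoly k) = l.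
Proof.
move=> kl; rewrite /kac_eigenpoly.
have -> : 'X + 1 = 'X - (-1)%:P :> {poly F} by rewrite polyCN opprK.
rewrite -polyC1 size_mul ?expf_neq0 ?polyXsubC_eq0 // !size_exp_XsubC; lia.
Qed.

Lemma kac_eigenpoly_ode k : (k < l)%N ->
  let h := kac_eigenpoly k in
  (1 - 'X ^+ 2) * h^`() + 'X * h *+ l.-1 = kac_eigen k *: h.
Proof.
move=> kl h; rewrite /h /kac_eigenpoly /kac_eigen.
have -> : l.-1 = ((l.-1 - k) + k)%N by lia.
rewrite addnK sylvester_ode scalerBl !scaler_nat mul2n -addnn !mulrnDr; ring.
Qed.

Lemma kac_eigenvector k : (k < l)%N ->
  let c := \col_(i < l) (kac_eigenpoly k)`_i in kac_mx *m c = kac_eigen k *: c.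
Proof.
move=> kl c; rewrite kac_mx_poly ?size_kac_eigenpoly // kac_eigenpoly_ode //.
by apply/matrixP => i j; rewrite !mxE coefZ.
Qed.

Lemma root_char_kac k : (k < l)%N -> root (char_poly kac_mx) (kac_eigen k).
Proof.
move=> kl; set c := \col_(i < l) (kac_eigenpoly k)`_i.
have c0 : c^T != 0.
  have top : (l.-1 < l)%N by lia.
  apply/eqP => /matrixP/(_ 0 (Ordinal top)) /eqP.
  rewrite !mxE /= -{1}(size_kac_eigenpoly kl) -lead_coefE.
  by rewrite (monicP (kac_eigenpoly_monic k)) oner_eq0.
rewrite /root horner_char_poly -det_tr; apply/det0P; exists c^T => //.
by rewrite -trmx_mul mulmxBl mul_scalar_mx kac_eigenvector // subrr trmx0.
Qed.

Lemma kac_eigen_inj : injective kac_eigen.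
Proof. by move=> k1 k2 /addrI /oppr_inj /eqP; rewrite eqr_nat => /eqP; lia. Qed.

Lemma root_char_kacP x :
  root (char_poly kac_mx) x <-> exists2 k, (k < l)%N & x = kac_eigen k.
Proof.
split=> [xroot | [k kl ->]]; last exact: root_char_kac.
set spec := [seq kac_eigen k | k <- iota 0 l].
have [/mapP [k] | x_notin] := boolP (x \in spec).
  by rewrite mem_iota add0n => kl ->; exists k.
have spec_roots : all (root (char_poly kac_mx)) (x :: spec).
  rewrite /= xroot; apply/allP => y /mapP [k].
  by rewrite mem_iota add0n => kl ->; apply: root_char_kac.
have spec_uniq : uniq (x :: spec).
  by rewrite /= x_notin (map_inj_uniq kac_eigen_inj) iota_uniq.
have := max_poly_roots (monic_neq0 (char_poly_monic kac_mx)) spec_roots spec_uniq.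
by rewrite size_char_poly /= size_map size_iota ltnn.
Qed.

Lemma kac_eigen_rev k : (k < l)%N -> kac_eigen (l.-1 - k) = - kac_eigen k.
Proof. by move=> kl; rewrite /kac_eigen !natrM natrB; [ring | lia]. Qed.

Lemma det_kac_pencil a b : (a, b) != (0, 0) ->
  \det (a%:M + b *: kac_mx) = 0 <->
  b != 0 /\ exists2 k, (k < l)%N & a = b * kac_eigen k.
Proof.
have [-> | b0] := eqVneq b 0 => ab.
  have a0 : a != 0 by apply: contraNneq ab => ->.
  rewrite scale0r addr0 det_scalar; split => [/eqP | []//].
  by rewrite expf_eq0 (negbTE a0) andbF.
have -> : a%:M + b *: kac_mx = - b *: ((- a / b)%:M - kac_mx).
  by rewrite scalerBr scale_scalar_mx scaleNr opprK; congr (_%:M + _); field.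
rewrite detZ -horner_char_poly; split.
  move/eqP; rewrite mulf_eq0 expf_eq0 oppr_eq0 (negbTE b0) andbF /=.
  case/root_char_kacP => k kl Ek; split=> //; exists (l.-1 - k)%N; first by lia.
  by rewrite kac_eigen_rev // -Ek; field.
case=> _ [k kl ->]; apply/eqP; rewrite mulf_eq0 orbC; apply/orP; left.
apply/root_char_kacP; exists (l.-1 - k)%N; first by lia.
by rewrite kac_eigen_rev //; field.
Qed.

End KacMatrix.

Arguments kac_mx {F} l.
Arguments kac_eigen {F} l k.

Section ComplexLimits.
Variable R : realType.
Local Notation C := (complex R).
Implicit Types (u v : nat -> C) (a b : C).

Lemma cabs_ge0 (z : C) : 0 <= cabs z.
Proof. by case: z => x y; rewrite /cabs /= sqrtr_ge0. Qed.

Lemma cabsD (x y : C) : cabs (x + y) <= cabs x + cabs y.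
Proof. exact: le_normcD. Qed.

Lemma cabsM (x y : C) : cabs (x * y) = cabs x * cabs y.
Proof. exact: Normc.normcM. Qed.

Lemma cabsN (x : C) : cabs (- x) = cabs x.
Proof. exact: normcN. Qed.

Lemma cabs_nat k : cabs (k%:R : C) = k%:R.
Proof. by rewrite /cabs normcMn Normc.normc1. Qed.

Lemma cabsV (x : C) : cabs x^-1 = (cabs x)^-1.
Proof. exact: Normc.normcV. Qed.

Lemma cvgC_ext u v a : (forall n, u n = v n) -> cvgC u a -> cvgC v a.
Proof. by move=> uv cu e /cu [N HN]; exists N => n /HN; rewrite uv. Qed.

Lemma cvgC_cst a : cvgC (fun=> a) a.
Proof. by move=> e e0; exists 0%N => n _; rewrite subrr /cabs Normc.normc0. Qed.

Lemma cvgCD u v a b : cvgC u a -> cvgC v b -> cvgC (fun n => u n + v n) (a + b).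
Proof.
move=> cu cv e e0; have e2 : 0 < e / 2 by rewrite divr_gt0.
have [N1 H1] := cu _ e2; have [N2 H2] := cv _ e2.
exists (maxn N1 N2) => n; rewrite geq_max => /andP [/H1 un /H2 vn].
have -> : u n + v n - (a + b) = (u n - a) + (v n - b) by ring.
have := cabsD (u n - a) (v n - b); lra.
Qed.

Lemma cvgCM u v a b : cvgC u a -> cvgC v b -> cvgC (fun n => u n * v n) (a * b).
Proof.
move=> cu cv e e0; set K := 1 + cabs a + cabs b.
have K0 : 0 < K by have := cabs_ge0 a; have := cabs_ge0 b; rewrite /K; lra.
set d := Num.min 1 (e / (2 * K)).
have d0 : 0 < d by rewrite lt_min ltr01 /= divr_gt0 // mulr_gt0.
have d1 : d <= 1 by rewrite ge_min lexx.
have dK : d * (2 * K) <= e by rewrite -ler_pdivlMr ?mulr_gt0 // ge_min lexx orbT.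
have [N1 H1] := cu _ d0; have [N2 H2] := cv _ d0.
exists (maxn N1 N2) => n; rewrite geq_max => /andP [/H1 un /H2 vn].
have -> : u n * v n - a * b = (u n - a) * (v n - b) + (a * (v n - b) + b * (u n - a))
  by ring.
have := cabsD ((u n - a) * (v n - b)) (a * (v n - b) + b * (u n - a)).
have := cabsD (a * (v n - b)) (b * (u n - a)); rewrite !cabsM.
have := cabs_ge0 (u n - a); have := cabs_ge0 (v n - b).
have := cabs_ge0 a; have := cabs_ge0 b; move: un vn dK d1 d0 K0; rewrite /K; nra.
Qed.

Lemma cvgC_sum (I : Type) (r : seq I) (P : pred I) (U : I -> nat -> C) (c : I -> C) :
  (forall i, cvgC (U i) (c i)) ->
  cvgC (fun n => \sum_(i <- r | P i) U i n) (\sum_(i <- r | P i) c i).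
Proof.
move=> cU; elim: r => [|i r IH].
  by rewrite big_nil; apply: cvgC_ext (cvgC_cst 0) => n; rewrite big_nil.
rewrite big_cons; case: ifP => Pi.
  by apply: cvgC_ext (cvgCD (cU i) IH) => n; rewrite big_cons Pi.
by apply: cvgC_ext IH => n; rewrite big_cons Pi.
Qed.

Lemma cvgC_prod (I : Type) (r : seq I) (P : pred I) (U : I -> nat -> C) (c : I -> C) :
  (forall i, cvgC (U i) (c i)) ->
  cvgC (fun n => \prod_(i <- r | P i) U i n) (\prod_(i <- r | P i) c i).
Proof.
move=> cU; elim: r => [|i r IH].
  by rewrite big_nil; apply: cvgC_ext (cvgC_cst 1) => n; rewrite big_nil.
rewrite big_cons; case: ifP => Pi.
  by apply: cvgC_ext (cvgCM (cU i) IH) => n; rewrite big_cons Pi.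
by apply: cvgC_ext IH => n; rewrite big_cons Pi.
Qed.

Lemma cvgC_det n (M : nat -> 'M[C]_n) (A : 'M[C]_n) :
  (forall i j, cvgC (fun k => M k i j) (A i j)) ->
  cvgC (fun k => \det (M k)) (\det A).
Proof.
move=> cM; apply: cvgC_sum => s; apply: cvgCM (cvgC_cst _) _.
by apply: cvgC_prod => i; apply: cM.
Qed.

Lemma cvgC_det_pencil n (A B : 'M[C]_n) t x y a b :
  cvgC t 0 -> cvgC x a -> cvgC y b ->
  cvgC (fun k => \det ((x k)%:M + (t k *: A + y k *: B))) (\det (a%:M + b *: B)).
Proof.
move=> ct cx cy; rewrite -[b *: B]add0r -(scale0r A); apply: cvgC_det => i j.
apply: (@cvgC_ext (fun k => x k *+ (i == j) + (t k * A i j + y k * B i j))).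
  by move=> k; rewrite !mxE.
rewrite !mxE; apply: cvgCD; last by apply: cvgCD; apply: cvgCM (cvgC_cst _).
by case: (i == j); [apply: cvgC_ext cx => k | apply: cvgC_ext (cvgC_cst 0) => k].
Qed.

Lemma cvgC_eq0 u a : (forall n, u n = 0) -> cvgC u a -> a = 0.
Proof.
move=> u0 cu; apply/eqP; apply: contraT => a0.
have ca : 0 < cabs a.
  by rewrite lt_def cabs_ge0 andbT; apply: contra a0 => /eqP /Normc.eq0_normc ->.
by have [N /(_ N (leqnn N))] := cu _ ca; rewrite u0 sub0r cabsN ltxx.
Qed.

Lemma inv_succ_lt (e : R) : 0 < e -> exists N : nat, (N.+1%:R)^-1 < e.
Proof.
move=> e0; have /archi_boundP : 0 <= e^-1 by rewrite invr_ge0 ltW.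
move=> ebound; exists (Num.bound e^-1).
rewrite invf_plt ?posrE ?ltr0Sn //; apply: lt_le_trans ebound _.
by rewrite ler_nat.
Qed.

Lemma cvgC_inv_succ_bound u a :
  (forall m, cabs (u m - a) <= (m.+1%:R)^-1) -> cvgC u a.
Proof.
move=> ub e /inv_succ_lt [N Ne]; exists N => m Nm.
apply: le_lt_trans (ub m) (le_lt_trans _ Ne).
by rewrite lef_pV2 ?posrE ?ltr0Sn // ler_nat.
Qed.

Lemma cvgC_inv_succ (k : nat -> nat) :
  (forall m, (m <= k m)%N) -> cvgC (fun m => ((k m).+1%:R)^-1 : C) 0.
Proof.
move=> mk; apply: cvgC_inv_succ_bound => m.
by rewrite subr0 cabsV cabs_nat lef_pV2 ?posrE ?ltr0Sn // ler_nat ltnS.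
Qed.

Lemma cabs_prod_ge (I : eqType) (r : seq I) (f : I -> C) (e : R) : 0 <= e ->
  (forall i, i \in r -> e <= cabs (f i)) -> e ^+ size r <= cabs (\prod_(i <- r) f i).
Proof.
move=> e0; elim: r => [|i r IH] fe; first by rewrite big_nil /cabs Normc.normc1.
rewrite big_cons cabsM exprS ler_pM ?exprn_ge0 ?fe ?mem_head //.
by apply: IH => j jr; rewrite fe // inE jr orbT.
Qed.

Lemma det_root_near n (N : 'M[C]_n) a (e : R) :
  0 < e -> cabs (\det (a%:M + N)) < e ^+ n ->
  exists2 z, \det (z%:M + N) = 0 & cabs (z - a) < e.
Proof.
move=> e0 det_small; set p := char_poly (- N).
have pE z : p.[z] = \det (z%:M + N) by rewrite horner_char_poly opprK.
have [rs prs] := closed_field_poly_normal p.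
rewrite (monicP (char_poly_monic _)) scale1r in prs.
have size_rs : size rs = n.
  by have := size_char_poly (- N); rewrite -/p prs size_prod_XsubC => -[].
have [/hasP [z zrs ze] | /hasPn far] := boolP (has (fun r => cabs (r - a) < e) rs).
  exists z => //; rewrite -pE; apply/eqP.
  by rewrite -/(root p z) prs root_prod_XsubC.
have detE : \det (a%:M + N) = \prod_(r <- rs) (a - r).
  by rewrite -pE prs horner_prod; apply: eq_bigr => r _; rewrite hornerXsubC.
have far_e r : r \in rs -> e <= cabs (a - r).
  by move/far; rewrite /= -leNgt -cabsN opprB.
have := le_lt_trans (cabs_prod_ge (ltW e0) far_e).
by rewrite -detE size_rs => /(_ _ det_small); rewrite ltxx.
Qed.

End ComplexLimits.

Definition Hmx_diag (F : nzRingType) l : 'M[F]_l :=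
  diag_mx (\row_(i < l) - (i * (l - i))%:R).

Section ClosureAtInfinity.
Variable R : realType.
Local Notation C := (complex R).
Implicit Types (a b : C).

Lemma Hmx_decomp l mu : Hmx l mu = Hmx_diag C l + mu *: kac_mx l.
Proof.
apply/matrixP => i j; rewrite !mxE eq_sym.
case: eqP => [<-|_]; first by rewrite mulr1n !(ltn_eqF (ltnSn i)) mulr0 addr0.
by rewrite mulr0n add0r; case: eqP => _ //; case: eqP => _; rewrite ?mulr0.
Qed.

Lemma scale_Hmx_shift l t lam mu :
  t *: (Hmx l mu + lam%:M) = (t * lam)%:M + (t *: Hmx_diag C l + (t * mu) *: kac_mx l).
Proof. by rewrite Hmx_decomp scalerDr scalerDr scale_scalar_mx scalerA addrC addrA. Qed.

Lemma closure_at_infinity_det l a b :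
  closure_at_infinity l a b -> \det (a%:M + b *: kac_mx l) = 0.
Proof.
case=> lam [mu [t [Pl0 [_ [ct [clam cmu]]]]]].
apply: cvgC_eq0 (cvgC_det_pencil (Hmx_diag C l) _ ct clam cmu) => n.
by rewrite -scale_Hmx_shift detZ -/(Pl _ _ _) Pl0 mulr0.
Qed.

Lemma Pl_rescale l (s z : C) b : s != 0 ->
  Pl l (s * z) (s * b) = s ^+ l * \det (z%:M + (s^-1 *: Hmx_diag C l + b *: kac_mx l)).
Proof.
move=> s0; rewrite -[in RHS](mulKf s0 z) -[in RHS](mulKf s0 b) -scale_Hmx_shift detZ.
by rewrite mulrA -exprMn mulfV // expr1n mul1r.
Qed.

Lemma det_closure_at_infinity l a b :
  \det (a%:M + b *: kac_mx l) = 0 -> closure_at_infinity l a b.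
Proof.
move=> det0; pose N k := (k.+1%:R)^-1 *: Hmx_diag C l + b *: kac_mx l.
have det_lim : cvgC (fun k => \det (a%:M + N k)) 0.
  by rewrite -det0; apply: cvgC_det_pencil (cvgC_cst a) (cvgC_cst b); exact: cvgC_inv_succ.
have near m : exists kz : nat * C, [/\ (m <= kz.1)%N, \det (kz.2%:M + N kz.1) = 0
    & cabs (kz.2 - a) < (m.+1%:R)^-1].
  have e0 : 0 < (m.+1%:R : R)^-1 by rewrite invr_gt0 ltr0Sn.
  have [K /(_ (maxn K m) (leq_maxl K m))] := det_lim _ (exprn_gt0 l e0).
  rewrite subr0 => /(det_root_near e0) [z z_root za].
  by exists (maxn K m, z); split => //; apply: leq_maxr.
have [f /all_and3 [mf f_root fa]] := functional_choice _ near.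
pose s m : C := (f m).1.+1%:R.
have s0 m : s m != 0 by rewrite pnatr_eq0.
exists (fun m => s m * (f m).2), (fun m => s m * b), (fun m => (s m)^-1).
split; [|split; [|split; [|split]]].
- by move=> m; rewrite Pl_rescale // f_root mulr0.
- by move=> m; rewrite invr_eq0.
- exact: cvgC_inv_succ.
- apply: cvgC_ext (cvgC_inv_succ_bound (fun m => ltW (fa m))) => m.
  by rewrite mulKf.
- by apply: cvgC_ext (cvgC_cst b) => m; rewrite mulKf.
Qed.

End ClosureAtInfinity.

Theorem proposition1p10 (R : realType) (l : nat) :
  (forall a b : complex R, (a, b) != (0, 0) ->
     (closure_at_infinity l a b <->
      (b != 0 /\ exists2 k : nat, (k < l)%N &
                   a = b * ((l.-1)%:R - (2 * k)%:R))))
  /\ ~ @closure_at_infinity R l 1 0.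
Proof.
split=> [a b ab | /closure_at_infinity_det].
  apply: iff_trans (det_kac_pencil l ab).
  by split; [apply: closure_at_infinity_det | apply: det_closure_at_infinity].
by case/det_kac_pencil; rewrite ?eqxx // xpair_eqE oner_eq0.
Qed.
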